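(* For every $F_{\mathrm{total}}\ge0$, the optimal value of problem (P4) is at least $T^{\lim}=\max\left\{\frac{\sum_{u=1}^U D_u/r_u}{B_{\mathrm{total}}},\ \frac{\sum_{u=1}^U\zeta_uD_u}{R^S_{\mathrm{total}}}\right\}$. Consequently, for any threshold $T^{\mathrm{th}}<T^{\lim}$ there is no choice of $F_{\mathrm{total}}\ge0$ for which problem (P4) has a feasible point with $T\le T^{\mathrm{th}}$; and if $T^{\mathrm{th}}\ge T^{\lim}$, then choosing $F_{\mathrm{total}}=F^{\lim}_{\mathrm{total}}:=\left(\sum_{u=1}^U\rho_uD_u\right)\min\left\{\frac{B_{\mathrm{total}}}{\sum_{u} D_u/r_u},\frac{R^S_{\mathrm{total}}}{\sum_{u}\zeta_uD_u}\right\}$ yields optimal value $T^{\lim}\le T^{\mathrm{th}}$, and every $F_{\mathrm{total}}\ge F^{\lim}_{\mathrm{total}}$ yields exactly the optimal value $T^{\lim}$.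
   Context: Users $u=1,\dots,U$ have constants $D_u>0$, $r_u>0$, $\rho_u>0$, $\zeta_u\in(0,1)$; $B_{\mathrm{total}}>0$, $R^S_{\mathrm{total}}>0$, $F_{\mathrm{total}}\ge0$. Problem (P4): minimize $T$ over $T\ge0$, $B_u\ge0$, $R_u^S\ge0$ ($u=1,\dots,U$) subject to $T\ge\frac{D_u}{B_ur_u}$ for all $u$ (infeasible if $B_u=0$), $\sum_uB_u\le B_{\mathrm{total}}$, $\sum_uR_u^S\le R^S_{\mathrm{total}}$, $\sum_u\rho_u\frac{B_ur_u-R_u^S}{1-\zeta_u}\le F_{\mathrm{total}}$, and $R_u^S\le B_ur_u\le\frac{R_u^S}{\zeta_u}$ for all $u$. *)

From HB Require Import structures.
From mathcomp Require Import all_boot all_order all_algebra.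
Set Implicit Arguments. Unset Strict Implicit. Unset Printing Implicit Defensive.
Import Order.TTheory GRing.Theory Num.Theory.
Local Open Scope ring_scope.

Section P4.
Variables (R : realFieldType) (U : nat).
Variables (D r rho zeta : 'I_U -> R) (Btot RStot Ftot : R).

(* (T, B, RS) is a feasible point of problem (P4) with fronthaul budget Ftot.
   The constraint T >= D_u/(B_u r_u) is infeasible when B_u = 0, hence 0 < B u. *)
Definition feasibleP4 (T : R) (B RS : 'I_U -> R) : Prop :=
  [/\ [/\ 0 <= T, (forall u, 0 <= B u) & (forall u, 0 <= RS u)],
      (forall u, 0 < B u /\ D u / (B u * r u) <= T),
      (\sum_(u < U) B u <= Btot) /\ (\sum_(u < U) RS u <= RStot),
      \sum_(u < U) rho u * (B u * r u - RS u) / (1 - zeta u) <= Ftot &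
      (forall u, RS u <= B u * r u /\ B u * r u <= RS u / zeta u)].

Definition optimal_valueP4 (v : R) : Prop :=
  (exists B RS, feasibleP4 v B RS) /\
  (forall T B RS, feasibleP4 T B RS -> v <= T).
End P4.

Definition Tlim (R : realFieldType) (U : nat) (D r zeta : 'I_U -> R)
  (Btot RStot : R) : R :=
  Num.max ((\sum_(u < U) D u / r u) / Btot) ((\sum_(u < U) zeta u * D u) / RStot).

Definition Flim (R : realFieldType) (U : nat) (D r rho zeta : 'I_U -> R)
  (Btot RStot : R) : R :=
  (\sum_(u < U) rho u * D u) *
  Num.min (Btot / (\sum_(u < U) D u / r u)) (RStot / (\sum_(u < U) zeta u * D u)).

From HB Require Import structures.
From mathcomp Require Import all_boot all_order all_algebra.
From mathcomp Require Import ring.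
Import Order.TTheory GRing.Theory Num.Theory.
Local Open Scope ring_scope.

(* Feasibility forces [D u / r u <= T B u] and, through [B u r u <= RS u / zeta u],
   [zeta u D u <= T RS u]; summing against the budgets [Btot] and [RStot] gives
   [T >= T^lim] whatever [Ftot] is.  Conversely, at [T = T^lim] the point
   [B u = D u / (r u T)], [RS u = zeta u D u / T] meets both budgets and the upper
   rate constraint with equality, and consumes [sum_u rho u D u / T = F^lim] of
   fronthaul, since [B u r u - RS u = (1 - zeta u) D u / T]. *)

Lemma sumr_gt0 {R : numDomainType} {I : finType} (i0 : I) (F : I -> R) :
  (forall i, 0 < F i) -> 0 < \sum_i F i.
Proof.
move=> F_gt0; rewrite lt_def sumr_ge0 => [|i _]; last exact: ltW.
rewrite psumr_neq0 => [|i _]; last exact: ltW.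
by rewrite andbT; apply/hasP; exists i0; rewrite ?mem_index_enum ?F_gt0.
Qed.

Lemma minr_pinv (R : realFieldType) (x y : R) : 0 < x -> 0 < y ->
  Num.min x^-1 y^-1 = (Num.max x y)^-1.
Proof.
move=> x_gt0 y_gt0; case: (lerP x y) => [le_xy | lt_yx].
- by case: lerP; rewrite // lef_pV2 ?posrE // => le_yx; rewrite (@le_anti _ _ x y) ?le_xy.
- by case: lerP; rewrite // ltf_pV2 ?posrE // => /(lt_trans lt_yx); rewrite ltxx.
Qed.

Section P4.
Variables (R : realFieldType) (U : nat) (D r rho zeta : 'I_U -> R).
Variables (Btot RStot Ftot : R).
Hypotheses (r_gt0 : forall u, 0 < r u) (zeta_gt0 : forall u, 0 < zeta u).
Hypotheses (Btot_gt0 : 0 < Btot) (RStot_gt0 : 0 < RStot).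

Local Notation feasible := (feasibleP4 D r rho zeta Btot RStot Ftot).
Local Notation T_lim := (Tlim D r zeta Btot RStot).
Local Notation F_lim := (Flim D r rho zeta Btot RStot).
Local Notation SB := (\sum_(u < U) D u / r u).
Local Notation SRS := (\sum_(u < U) zeta u * D u).

Section LowerBound.
Variables (T : R) (B RS : 'I_U -> R).
Hypothesis feasTBRS : feasible T B RS.

Lemma feasibleP4_Dr_le u : D u / r u <= T * B u.
Proof.
have [_ /(_ u)[B_gt0 delay_le] _ _ _] := feasTBRS.
by rewrite ler_pdivrMr // -mulrA -ler_pdivrMr ?mulr_gt0.
Qed.

Lemma feasibleP4_zetaD_le u : zeta u * D u <= T * RS u.
Proof.
have [[T_ge0 _ _] _ _ _ /(_ u)[_ rate_le]] := feasTBRS.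
have zetaBr_le : zeta u * (B u * r u) <= RS u by rewrite mulrC -ler_pdivlMr.
have := feasibleP4_Dr_le u; rewrite ler_pdivrMr // => D_le.
apply: (le_trans (ler_wpM2l (ltW (zeta_gt0 u)) D_le)).
by rewrite -mulrA mulrCA ler_wpM2l.
Qed.

Lemma Tlim_le_feasibleP4 : T_lim <= T.
Proof.
have [[T_ge0 _ _] _ [sumB_le sumRS_le] _ _] := feasTBRS.
rewrite ge_max !ler_pdivrMr //; apply/andP; split.
- apply: le_trans (ler_wpM2l T_ge0 sumB_le).
  by rewrite mulr_sumr; apply: ler_sum => u _; apply: feasibleP4_Dr_le.
- apply: le_trans (ler_wpM2l T_ge0 sumRS_le).
  by rewrite mulr_sumr; apply: ler_sum => u _; apply: feasibleP4_zetaD_le.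
Qed.

End LowerBound.

Section Attainment.
Hypotheses (U_gt0 : (0 < U)%N) (D_gt0 : forall u, 0 < D u).
Hypothesis (zeta_lt1 : forall u, zeta u < 1).

Let u0 : 'I_U := Ordinal U_gt0.

Lemma SB_gt0 : 0 < SB.
Proof. by apply: (sumr_gt0 u0) => u; rewrite divr_gt0. Qed.

Lemma SRS_gt0 : 0 < SRS.
Proof. by apply: (sumr_gt0 u0) => u; rewrite mulr_gt0. Qed.

Lemma SB_le_Tlim : SB / Btot <= T_lim.
Proof. by rewrite /Tlim le_max lexx. Qed.

Lemma SRS_le_Tlim : SRS / RStot <= T_lim.
Proof. by rewrite /Tlim le_max lexx orbT. Qed.

Lemma Tlim_gt0 : 0 < T_lim.
Proof. by apply: lt_le_trans SB_le_Tlim; rewrite divr_gt0 ?SB_gt0. Qed.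

Lemma Flim_Tlim : F_lim = (\sum_(u < U) rho u * D u) / T_lim.
Proof.
by rewrite /Flim -(invf_div SB) -(invf_div SRS) minr_pinv ?divr_gt0 ?SB_gt0 ?SRS_gt0.
Qed.

Definition Blim u := D u / r u / T_lim.
Definition RSlim u := zeta u * D u / T_lim.

Lemma Blim_mulr u : Blim u * r u = D u / T_lim.
Proof. by rewrite /Blim mulrAC divfK // gt_eqF. Qed.

Lemma fronthaul_lim u :
  rho u * (Blim u * r u - RSlim u) / (1 - zeta u) = rho u * D u / T_lim.
Proof.
have one_zeta_neq0 : 1 - zeta u != 0 by rewrite subr_eq0 gt_eqF.
by rewrite Blim_mulr /RSlim; field; rewrite one_zeta_neq0 gt_eqF ?Tlim_gt0.
Qed.

Lemma feasibleP4_lim : F_lim <= Ftot -> feasible T_lim Blim RSlim.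
Proof.
move=> Flim_le; have T_gt0 := Tlim_gt0.
split.
- split=> [|u|u]; first exact: ltW.
  + by rewrite ltW // !divr_gt0.
  + by rewrite ltW // divr_gt0 ?mulr_gt0.
- move=> u; split; first by rewrite !divr_gt0.
  by rewrite Blim_mulr invf_div mulrC divfK ?gt_eqF.
- rewrite -!mulr_suml !ler_pdivrMr // (mulrC Btot) (mulrC RStot) -!ler_pdivrMr //.
  by split; [exact: SB_le_Tlim | exact: SRS_le_Tlim].
- apply: le_trans Flim_le.
  by rewrite Flim_Tlim mulr_suml (eq_bigr _ (fun u _ => fronthaul_lim u)).
- move=> u; rewrite Blim_mulr /RSlim; split.
  + by rewrite ler_pM2r ?invr_gt0 // ger_pMl // ltW.
  + by rewrite mulrAC [zeta u * _]mulrC mulfK ?gt_eqF.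
Qed.

Lemma optimal_valueP4_Tlim :
  F_lim <= Ftot -> optimal_valueP4 D r rho zeta Btot RStot Ftot T_lim.
Proof.
move=> Flim_le; split; first by exists Blim, RSlim; apply: feasibleP4_lim.
by move=> T B RS; apply: Tlim_le_feasibleP4.
Qed.

End Attainment.
End P4.

Theorem mainTheorem7 (R : realFieldType) (U : nat) (hU : (0 < U)%N)
  (D r rho zeta : 'I_U -> R) (Btot RStot : R)
  (hD : forall u, 0 < D u) (hr : forall u, 0 < r u) (hrho : forall u, 0 < rho u)
  (hzeta : forall u, 0 < zeta u /\ zeta u < 1)
  (hB : 0 < Btot) (hRS : 0 < RStot) :
  (forall Ftot, 0 <= Ftot -> forall T B RS,
     feasibleP4 D r rho zeta Btot RStot Ftot T B RS ->
     Tlim D r zeta Btot RStot <= T) /\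
  (forall Tth, Tth < Tlim D r zeta Btot RStot ->
     ~ exists Ftot T B RS, 0 <= Ftot /\
         feasibleP4 D r rho zeta Btot RStot Ftot T B RS /\ T <= Tth) /\
  (forall Tth, Tlim D r zeta Btot RStot <= Tth ->
     optimal_valueP4 D r rho zeta Btot RStot (Flim D r rho zeta Btot RStot)
       (Tlim D r zeta Btot RStot) /\
     Tlim D r zeta Btot RStot <= Tth /\
     forall Ftot, Flim D r rho zeta Btot RStot <= Ftot ->
       optimal_valueP4 D r rho zeta Btot RStot Ftot (Tlim D r zeta Btot RStot)).
Proof.
have zeta_gt0 u : 0 < zeta u by case: (hzeta u).
have zeta_lt1 u : zeta u < 1 by case: (hzeta u).
have lower_bound Ftot T B RS := @Tlim_le_feasibleP4 R U D r rho zeta Btot RStot Ftot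
  hr zeta_gt0 hB hRS T B RS.
have optimal Ftot := @optimal_valueP4_Tlim R U D r rho zeta Btot RStot Ftot
  hr zeta_gt0 hB hRS hU hD zeta_lt1.
split; first by move=> Ftot _; apply: lower_bound.
split.
  move=> Tth Tth_lt [Ftot [T [B [RS [_ [feas T_le]]]]]].
  by have := le_lt_trans (le_trans (lower_bound _ _ _ _ feas) T_le) Tth_lt; rewrite ltxx.
by move=> Tth Tth_ge; split; [exact: optimal | split].
Qed.
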